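(* Let $n\ge 1$ and let $x_k=-\cos\frac{k\pi}{n}$, $k=0,\dots,n$ (the Chebyshev points of the second kind). Let $\theta_0,\dots,\theta_n$ be real numbers and $\hat x_k:=(1+\theta_k)x_k$. Then for every $k\in\{0,\dots,n\}$, \[ \sum_{j\neq k}|r_{jk}(\mathbf{x},\hat{\mathbf{x}})|\le 2.6\,\|\theta\|_\infty\, n^2 . \]
   Context: $r_{jk}(\mathbf{x},\hat{\mathbf{x}}):=\dfrac{\hat x_k-\hat x_j}{x_k-x_j}-1$ for $j\neq k$, and $\|\theta\|_\infty=\max_k|\theta_k|$. *)

From Stdlib Require Import Reals Lra Lia.
Open Scope R_scope.

Definition cheb (n k : nat) : R := - cos (INR k * PI / INR n).

Definition xhat (n : nat) (theta : nat -> R) (k : nat) : R :=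
  (1 + theta k) * cheb n k.

Definition r_jk (x xh : nat -> R) (j k : nat) : R :=
  (xh k - xh j) / (x k - x j) - 1.

Fixpoint max_abs (theta : nat -> R) (n : nat) : R :=
  match n with
  | O => Rabs (theta O)
  | S m => Rmax (max_abs theta m) (Rabs (theta (S m)))
  end.

Definition sum_except (n k : nat) (f : nat -> R) : R :=
  sum_f_R0 (fun j => if Nat.eq_dec j k then 0 else f j) n.

(* Writing q = PI / (2n), the identity
     x_k - x_j = 2 sin ((k - j) q) sin ((k + j) q)
   together with Jordan-type bounds [sin y >= c y] on [0, PI/2], c = 1 - PI^2/24, gives
     |x_k - x_j| >= 2 (c q)^2 |k - j| U   whenever U <= min (k + j, 2n - k - j).
   One may take U = |k - j|, and U = |k - j| + 1 when neither j nor k is an endpoint.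
   Since |r_jk| = |theta_k x_k - theta_j x_j| / |x_k - x_j| <= 2 ||theta|| / |x_k - x_j| and
   4 / (c PI)^2 <= 1.3, the claim reduces to [sum_(j <> k) 1 / (|k - j| U) <= 2], which is
   a telescoping estimate: the inner terms are 1/d - 1/(d+1), the endpoint terms 1/d^2. *)

From Stdlib Require Import Reals Lra Lia.
Open Scope R_scope.

Lemma PI_ge_28_10 : 28/10 <= PI.
Proof. destruct (PI_ineq 1) as [H _]; unfold tg_alt, PI_tg in H; simpl in H; lra. Qed.

Lemma PI_le_334_100 : PI <= 334/100.
Proof. destruct (PI_ineq 2) as [_ H]; unfold tg_alt, PI_tg in H; simpl in H; lra. Qed.

Definition jordan_const : R := 1 - PI ^ 2 / 24.

Lemma jordan_const_pos : 0 < jordan_const.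
Proof. unfold jordan_const; pose proof PI_ge_28_10; pose proof PI_le_334_100; nra. Qed.

(* From [sin y >= y - y^3/6] and [y^2 <= PI^2/4]. *)
Lemma sin_ge_jordan (y : R) : 0 <= y -> y <= PI / 2 -> jordan_const * y <= sin y.
Proof.
  intros Hy0 Hy1; destruct (sin_bound y 0) as [Hsin _]; try lra.
  unfold sin_approx, sin_term in Hsin; simpl in Hsin; unfold jordan_const.
  assert (y * y <= PI * PI / 4) by nra; nra.
Qed.

Lemma Rabs_sin_ge_jordan (y : R) : Rabs y <= PI / 2 -> jordan_const * Rabs y <= Rabs (sin y).
Proof.
  intros Hy; pose proof PI_ge_28_10.
  destruct (Rle_dec 0 y) as [Hpos | Hneg].
  - rewrite Rabs_right in * by lra; rewrite Rabs_right.
    + exact (sin_ge_jordan y Hpos Hy).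
    + apply Rle_ge, sin_ge_0; lra.
  - rewrite Rabs_left in Hy |- * by lra; replace y with (- (- y)) at 2 by ring.
    rewrite sin_neg, Rabs_Ropp, Rabs_right.
    + apply sin_ge_jordan; lra.
    + apply Rle_ge, sin_ge_0; lra.
Qed.

Lemma sin_ge_jordan_min (y U : R) :
  0 <= U -> U <= y -> U <= PI - y -> jordan_const * U <= sin y.
Proof.
  intros HU0 HUy HUPy; pose proof jordan_const_pos.
  destruct (Rle_dec y (PI / 2)).
  - apply Rle_trans with (jordan_const * y); [nra | apply sin_ge_jordan; lra].
  - rewrite <- sin_PI_x; apply Rle_trans with (jordan_const * (PI - y));
      [nra | apply sin_ge_jordan; lra].
Qed.

Lemma cheb_sub (n k j : nat) : (1 <= n)%nat ->
  cheb n k - cheb n j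
  = 2 * sin ((INR k - INR j) * (PI / (2 * INR n)))
      * sin ((INR k + INR j) * (PI / (2 * INR n))).
Proof.
  intros Hn; apply (le_INR 1) in Hn; simpl in Hn; unfold cheb.
  replace (- cos (INR k * PI / INR n) - - cos (INR j * PI / INR n))
    with (cos (INR j * PI / INR n) - cos (INR k * PI / INR n)) by ring.
  rewrite form2.
  replace ((INR j * PI / INR n - INR k * PI / INR n) / 2)
    with (- ((INR k - INR j) * (PI / (2 * INR n)))) by (field; lra).
  replace ((INR j * PI / INR n + INR k * PI / INR n) / 2)
    with ((INR k + INR j) * (PI / (2 * INR n))) by (field; lra).
  rewrite sin_neg; ring.
Qed.

Lemma Rabs_cheb_sub_ge (n k j : nat) (U : R) :
  (1 <= n)%nat -> (k <= n)%nat -> (j <= n)%nat ->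
  0 <= U -> U <= INR k + INR j -> U <= 2 * INR n - INR k - INR j ->
  2 * (jordan_const * (PI / (2 * INR n))) ^ 2 * (Rabs (INR k - INR j) * U)
  <= Rabs (cheb n k - cheb n j).
Proof.
  intros Hn Hk Hj HU0 HU1 HU2.
  rewrite (cheb_sub n k j Hn), !Rabs_mult, (Rabs_right 2) by lra.
  apply le_INR in Hn, Hk, Hj; simpl in Hn.
  pose proof (pos_INR k); pose proof (pos_INR j); pose proof jordan_const_pos.
  set (q := PI / (2 * INR n)).
  assert (Hq : 0 < q) by (unfold q; pose proof PI_ge_28_10; apply Rdiv_lt_0_compat; lra).
  assert (HnQ : INR n * q = PI / 2) by (unfold q; field; lra).
  assert (Hsub : jordan_const * (Rabs (INR k - INR j) * q)
                 <= Rabs (sin ((INR k - INR j) * q))).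
  { rewrite <- (Rabs_right q) at 1 by lra; rewrite <- Rabs_mult.
    apply Rabs_sin_ge_jordan; rewrite Rabs_mult, (Rabs_right q), <- HnQ by lra.
    apply Rmult_le_compat_r; [lra | apply Rabs_le; lra]. }
  assert (Hadd : jordan_const * (U * q) <= Rabs (sin ((INR k + INR j) * q))).
  { eapply Rle_trans; [| apply RRle_abs].
    apply sin_ge_jordan_min; nra. }
  assert (0 <= jordan_const * (Rabs (INR k - INR j) * q)).
  { apply Rmult_le_pos; [lra | apply Rmult_le_pos; [apply Rabs_pos | lra]]. }
  apply Rle_trans with (2 * (jordan_const * (Rabs (INR k - INR j) * q))
                          * (jordan_const * (U * q))); [right; ring |].
  apply Rmult_le_compat; try lra.
  apply Rmult_le_pos; [lra | apply Rmult_le_pos; lra].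
Qed.

(* [(c PI)^2 >= 40/13] because [PI - PI^3/24 >= 1.76] on [2.8, 3.34]. *)
Lemma inv_sq_jordan_PI_div_le (n : nat) : (1 <= n)%nat ->
  / (jordan_const * (PI / (2 * INR n))) ^ 2 <= 13 / 10 * INR n ^ 2.
Proof.
  intros Hn; apply (le_INR 1) in Hn; simpl in Hn.
  pose proof PI_le_334_100; pose proof PI_ge_28_10; pose proof jordan_const_pos.
  assert (HcPI : 40 / 13 <= (jordan_const * PI) ^ 2).
  { unfold jordan_const.
    assert (0 <= (PI - 28/10) * (334/100 - PI) * (PI + 614/100)).
    { apply Rmult_le_pos; [apply Rmult_le_pos |]; lra. }
    replace ((1 - PI ^ 2 / 24) * PI) with (PI - PI ^ 3 / 24) by field; nra. }
  replace (/ (jordan_const * (PI / (2 * INR n))) ^ 2)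
    with (4 * INR n ^ 2 / (jordan_const * PI) ^ 2) by (field; lra).
  apply Rle_trans with (4 * INR n ^ 2 / (40 / 13)).
  - apply Rmult_le_compat_l; [nra |]; apply Rinv_le_contravar; lra.
  - lra.
Qed.

Definition is_endpoint (n i : nat) : bool := ((i =? 0)%nat || (i =? n)%nat)%bool.

(* Off the boundary, [min (k + j, 2n - k - j) >= |k - j| + 1]. *)
Definition pair_gap (n k j : nat) : R :=
  if (is_endpoint n k || is_endpoint n j)%bool then 0 else 1.

Definition pair_weight (n k j : nat) : R :=
  let d := Rabs (INR k - INR j) in / (d * (d + pair_gap n k j)).

Lemma one_le_Rabs_INR_sub (k j : nat) : j <> k -> 1 <= Rabs (INR k - INR j).
Proof.
  intros Hjk; destruct (proj1 (Nat.lt_gt_cases j k) Hjk) as [Hlt | Hlt].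
  - apply (le_INR (S j)) in Hlt; rewrite S_INR in Hlt; rewrite Rabs_right; lra.
  - apply (le_INR (S k)) in Hlt; rewrite S_INR in Hlt; rewrite Rabs_left; lra.
Qed.

Lemma Rabs_INR_sub_add_gap_le (n k j : nat) : (k <= n)%nat -> (j <= n)%nat ->
  Rabs (INR k - INR j) + pair_gap n k j <= INR k + INR j /\
  Rabs (INR k - INR j) + pair_gap n k j <= 2 * INR n - INR k - INR j.
Proof.
  intros Hk Hj; unfold pair_gap, is_endpoint.
  pose proof (le_INR _ _ Hk); pose proof (le_INR _ _ Hj).
  pose proof (pos_INR k); pose proof (pos_INR j).
  destruct (((k =? 0)%nat || (k =? n)%nat) || ((j =? 0)%nat || (j =? n)%nat))%bool eqn:E.
  - unfold Rabs; destruct Rcase_abs; split; lra.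
  - rewrite !Bool.orb_false_iff, !Nat.eqb_neq in E.
    destruct E as [[Hk0 Hkn] [Hj0 Hjn]].
    assert (1 <= INR k /\ 1 <= INR j) as [] by (split; apply (le_INR 1); lia).
    assert (INR k + 1 <= INR n /\ INR j + 1 <= INR n) as [].
    { rewrite <- !S_INR; split; apply le_INR; lia. }
    unfold Rabs; destruct Rcase_abs; split; lra.
Qed.

Lemma inv_Rabs_cheb_sub_le (n k j : nat) :
  (1 <= n)%nat -> (k <= n)%nat -> (j <= n)%nat -> j <> k ->
  0 < Rabs (cheb n k - cheb n j) /\
  / Rabs (cheb n k - cheb n j) <= 13 / 20 * INR n ^ 2 * pair_weight n k j.
Proof.
  intros Hn Hk Hj Hjk.
  pose proof (one_le_Rabs_INR_sub k j Hjk) as Hd.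
  destruct (Rabs_INR_sub_add_gap_le n k j Hk Hj) as [HU1 HU2].
  assert (Hgap : 0 <= pair_gap n k j).
  { unfold pair_gap; destruct (is_endpoint n k || is_endpoint n j)%bool; lra. }
  set (d := Rabs (INR k - INR j)) in *; set (U := d + pair_gap n k j) in *.
  pose proof (Rabs_cheb_sub_ge n k j U Hn Hk Hj ltac:(unfold U; lra) HU1 HU2) as Hlow.
  pose proof (inv_sq_jordan_PI_div_le n Hn) as Hconst.
  set (c := (jordan_const * (PI / (2 * INR n))) ^ 2) in *.
  assert (Hc : 0 < c).
  { unfold c; apply pow_lt, Rmult_lt_0_compat; [apply jordan_const_pos |].
    apply (le_INR 1) in Hn; pose proof PI_ge_28_10; apply Rdiv_lt_0_compat; simpl in *; lra. }
  assert (HdU : 0 < d * U) by (apply Rmult_lt_0_compat; unfold U; lra).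
  assert (0 < 2 * c * (d * U)) by (apply Rmult_lt_0_compat; [apply Rmult_lt_0_compat |]; lra).
  fold d in Hlow; split; [lra |].
  apply Rle_trans with (/ 2 * / c * pair_weight n k j).
  - unfold pair_weight; fold d U.
    rewrite <- !Rinv_mult; apply Rinv_le_contravar; [nra | lra].
  - assert (0 <= pair_weight n k j) by (unfold pair_weight; fold d U; left; apply Rinv_0_lt_compat; lra).
    replace (13 / 20 * INR n ^ 2) with (/ 2 * (13 / 10 * INR n ^ 2)) by field.
    apply Rmult_le_compat_r; [lra |]; apply Rmult_le_compat_l; lra.
Qed.

Lemma r_jk_scaled (x theta : nat -> R) (j k : nat) : x k <> x j ->
  r_jk x (fun i => (1 + theta i) * x i) j k
  = (theta k * x k - theta j * x j) / (x k - x j).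
Proof. intros Hx; unfold r_jk; field; lra. Qed.

Lemma Rabs_r_jk_scaled_le (x theta : nat -> R) (M : R) (j k : nat) :
  Rabs (x k) <= 1 -> Rabs (x j) <= 1 ->
  Rabs (theta k) <= M -> Rabs (theta j) <= M -> x k <> x j ->
  Rabs (r_jk x (fun i => (1 + theta i) * x i) j k) <= 2 * M / Rabs (x k - x j).
Proof.
  intros Hxk Hxj Htk Htj Hx.
  rewrite r_jk_scaled by lra; unfold Rdiv; rewrite Rabs_mult, Rabs_inv.
  apply Rmult_le_compat_r; [left; apply Rinv_0_lt_compat, Rabs_pos_lt; lra |].
  eapply Rle_trans; [apply Rabs_triang |]; rewrite Rabs_Ropp, !Rabs_mult.
  pose proof (Rabs_pos (theta k)); pose proof (Rabs_pos (theta j)).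
  pose proof (Rabs_pos (x k)); pose proof (Rabs_pos (x j)).
  assert (Rabs (theta k) * Rabs (x k) <= M) by nra.
  assert (Rabs (theta j) * Rabs (x j) <= M) by nra.
  lra.
Qed.

Lemma Rabs_cheb_le_1 (n k : nat) : Rabs (cheb n k) <= 1.
Proof. unfold cheb; rewrite Rabs_Ropp; apply Rabs_le, COS_bound. Qed.

Lemma Rabs_le_max_abs (theta : nat -> R) (n j : nat) :
  (j <= n)%nat -> Rabs (theta j) <= max_abs theta n.
Proof.
  induction n as [| n IH]; intros Hj; simpl.
  - replace j with 0%nat by lia; lra.
  - destruct (Nat.eq_dec j (S n)) as [-> | Hne]; [apply Rmax_r |].
    eapply Rle_trans; [apply IH; lia | apply Rmax_l].
Qed.

Lemma Rabs_r_jk_cheb_le (n : nat) (theta : nat -> R) (j k : nat) :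
  (1 <= n)%nat -> (k <= n)%nat -> (j <= n)%nat -> j <> k ->
  Rabs (r_jk (cheb n) (xhat n theta) j k)
  <= 13 / 10 * max_abs theta n * INR n ^ 2 * pair_weight n k j.
Proof.
  intros Hn Hk Hj Hjk.
  destruct (inv_Rabs_cheb_sub_le n k j Hn Hk Hj Hjk) as [Hpos Hinv].
  assert (HM : 0 <= max_abs theta n) by
    (eapply Rle_trans; [apply Rabs_pos | apply (Rabs_le_max_abs theta n k Hk)]).
  eapply Rle_trans.
  - apply (Rabs_r_jk_scaled_le _ _ (max_abs theta n));
      try apply Rabs_cheb_le_1; try apply Rabs_le_max_abs; auto.
    intros E; rewrite E, Rminus_diag, Rabs_R0 in Hpos; lra.
  - apply Rle_trans with (2 * max_abs theta n * (13 / 20 * INR n ^ 2 * pair_weight n k j)).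
    + apply Rmult_le_compat_l; lra.
    + right; field.
Qed.

Lemma sum_f_R0_le_telescoping (f g : nat -> R) (N : nat) :
  (forall j, (j <= N)%nat -> f j <= g (S j) - g j) ->
  sum_f_R0 f N <= g (S N) - g O.
Proof.
  induction N as [| N IH]; intros Hstep; simpl.
  - apply Hstep; lia.
  - specialize (IH (fun j Hj => Hstep j ltac:(lia))); specialize (Hstep (S N) (le_n _)); lra.
Qed.

Lemma sum_except_le (n k : nat) (f g : nat -> R) :
  (forall j, (j <= n)%nat -> j <> k -> f j <= g j) ->
  sum_except n k f <= sum_except n k g.
Proof.
  intros Hfg; apply sum_Rle; intros j Hj.
  destruct (Nat.eq_dec j k); [lra | auto].
Qed.

Lemma sum_except_scal (n k : nat) (c : R) (f : nat -> R) :
  sum_except n k (fun j => c * f j) = c * sum_except n k f.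
Proof.
  unfold sum_except; rewrite scal_sum; apply sum_eq; intros j _.
  destruct (Nat.eq_dec j k); ring.
Qed.

(* [1/(d(d+1)) = 1/d - 1/(d+1)], and [1/d^2] is at most twice that. *)
Lemma inv_mul_add_gap_le (d : R) (endpoint : bool) : 1 <= d ->
  / (d * (d + if endpoint then 0 else 1)) <= (if endpoint then 2 else 1) * (/ d - / (d + 1)).
Proof.
  intros Hd; replace (/ d - / (d + 1)) with (/ (d * (d + 1))) by (field; lra).
  destruct endpoint.
  - rewrite Rplus_0_r; replace (2 * / (d * (d + 1))) with (/ (d * ((d + 1) / 2))) by (field; lra).
    apply Rinv_le_contravar; nra.
  - lra.
Qed.

Lemma inv_sq_le_div (d a : R) : 1 <= d -> 1 <= a -> / (d * d) <= a / d.
Proof.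
  intros Hd Ha; rewrite Rinv_mult; unfold Rdiv; rewrite (Rmult_comm a).
  assert (0 < / d <= 1) by (split; [apply Rinv_0_lt_compat | rewrite <- Rinv_1; apply Rinv_le_contravar]; lra).
  apply Rmult_le_compat_l; lra.
Qed.

(* An upper bound for the partial sums [sum_(i < j, i <> k) pair_weight n k i]. *)
Definition weight_potential (n k j : nat) : R :=
  if (j <=? k)%nat then
    (if (j =? 0)%nat then 0 else (if (k =? n)%nat then 2 else 1) / (INR (k - j) + 1))
  else if (j <=? n)%nat then 2 - (if (k =? 0)%nat then 2 else 1) / INR (j - k)
  else 2.

Lemma Rabs_INR_sub (k j : nat) : (j <= k)%nat -> Rabs (INR k - INR j) = INR (k - j).
Proof.
  intros Hjk; rewrite minus_INR by exact Hjk.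
  apply Rabs_right; apply le_INR in Hjk; lra.
Qed.

Lemma pair_weight_left_step (n k j : nat) : (k <= n)%nat -> (j < k)%nat ->
  pair_weight n k j <= weight_potential n k (S j) - weight_potential n k j.
Proof.
  intros Hk Hjk; unfold pair_weight, weight_potential.
  rewrite Rabs_INR_sub by lia.
  assert (Hd : 1 <= INR (k - j)) by (apply (le_INR 1); lia).
  rewrite (proj2 (Nat.leb_le (S j) k) Hjk); simpl Nat.eqb.
  replace (INR (k - S j) + 1) with (INR (k - j)) by (rewrite <- S_INR; f_equal; lia).
  destruct (Nat.eq_dec j 0) as [-> | Hj0].
  - replace (pair_gap n k 0) with 0 by (unfold pair_gap, is_endpoint; rewrite Bool.orb_true_r; reflexivity).
    rewrite Rplus_0_r, Rminus_0_r; apply inv_sq_le_div; [lra |].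
    destruct (k =? n)%nat; lra.
  - rewrite (proj2 (Nat.leb_le j k)), (proj2 (Nat.eqb_neq j 0)) by lia.
    replace (pair_gap n k j) with (if (k =? n)%nat then 0 else 1).
    + eapply Rle_trans; [apply inv_mul_add_gap_le; exact Hd | right; field].
      split; lra.
    + unfold pair_gap, is_endpoint.
      rewrite (proj2 (Nat.eqb_neq k 0)), (proj2 (Nat.eqb_neq j 0)), (proj2 (Nat.eqb_neq j n)) by lia.
      destruct (k =? n)%nat; reflexivity.
Qed.

Lemma pair_weight_right_step (n k j : nat) : (j <= n)%nat -> (k < j)%nat ->
  pair_weight n k j <= weight_potential n k (S j) - weight_potential n k j.
Proof.
  intros Hj Hkj; unfold pair_weight, weight_potential.
  rewrite Rabs_minus_sym, Rabs_INR_sub by lia.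
  assert (Hd : 1 <= INR (j - k)) by (apply (le_INR 1); lia).
  rewrite (proj2 (Nat.leb_gt j k) Hkj), (proj2 (Nat.leb_gt (S j) k)) by lia.
  rewrite (proj2 (Nat.leb_le j n) Hj).
  destruct (Nat.eq_dec j n) as [-> | Hjn].
  - replace (pair_gap n k n) with 0
      by (unfold pair_gap, is_endpoint; rewrite Nat.eqb_refl, !Bool.orb_true_r; reflexivity).
    rewrite (proj2 (Nat.leb_gt (S n) n)) by lia.
    replace (2 - (2 - (if (k =? 0)%nat then 2 else 1) / INR (n - k)))
      with ((if (k =? 0)%nat then 2 else 1) / INR (n - k)) by ring.
    rewrite Rplus_0_r; apply inv_sq_le_div; [lra |]; destruct (k =? 0)%nat; lra.
  - rewrite (proj2 (Nat.leb_le (S j) n)) by lia.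
    replace (INR (S j - k)) with (INR (j - k) + 1) by (rewrite <- S_INR; f_equal; lia).
    replace (pair_gap n k j) with (if (k =? 0)%nat then 0 else 1).
    + eapply Rle_trans; [apply inv_mul_add_gap_le; exact Hd | right; field].
      split; lra.
    + unfold pair_gap, is_endpoint.
      rewrite (proj2 (Nat.eqb_neq k n)), (proj2 (Nat.eqb_neq j 0)), (proj2 (Nat.eqb_neq j n)) by lia.
      rewrite !Bool.orb_false_r; destruct (k =? 0)%nat; reflexivity.
Qed.

Lemma weight_potential_diag_step (n k : nat) : (1 <= n)%nat -> (k <= n)%nat ->
  0 <= weight_potential n k (S k) - weight_potential n k k.
Proof.
  intros Hn Hk; unfold weight_potential.
  rewrite Nat.leb_refl, (proj2 (Nat.leb_gt (S k) k)), Nat.sub_diag by lia.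
  replace (S k - k)%nat with 1%nat by lia; simpl INR.
  destruct (Nat.eq_dec k n) as [-> | Hkn].
  - rewrite (proj2 (Nat.leb_gt (S n) n)), Nat.eqb_refl by lia.
    destruct (n =? 0)%nat; lra.
  - rewrite (proj2 (Nat.leb_le (S k) n)), (proj2 (Nat.eqb_neq k n)) by lia.
    destruct (k =? 0)%nat; lra.
Qed.

Lemma sum_pair_weight_le_2 (n k : nat) : (1 <= n)%nat -> (k <= n)%nat ->
  sum_except n k (pair_weight n k) <= 2.
Proof.
  intros Hn Hk; unfold sum_except.
  eapply Rle_trans; [apply (sum_f_R0_le_telescoping _ (weight_potential n k)) |].
  - intros j Hj; destruct (Nat.eq_dec j k) as [-> | Hjk].
    + exact (weight_potential_diag_step n k Hn Hk).
    + destruct (Nat.lt_gt_cases j k) as [[Hlt | Hlt] _]; [exact Hjk | |].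
      * exact (pair_weight_left_step n k j Hk Hlt).
      * exact (pair_weight_right_step n k j Hj Hlt).
  - unfold weight_potential.
    rewrite (proj2 (Nat.leb_gt (S n) k)), (proj2 (Nat.leb_gt (S n) n)) by lia; simpl; lra.
Qed.

Theorem theorem1 (n : nat) (theta : nat -> R) (k : nat) :
  (1 <= n)%nat -> (k <= n)%nat ->
  sum_except n k (fun j => Rabs (r_jk (cheb n) (xhat n theta) j k))
  <= (26 / 10) * max_abs theta n * INR n ^ 2.
Proof.
  intros Hn Hk.
  set (C := 13 / 10 * max_abs theta n * INR n ^ 2).
  assert (HC : 0 <= C).
  { unfold C; pose proof (Rabs_le_max_abs theta n k Hk); pose proof (Rabs_pos (theta k)).
    apply Rmult_le_pos; [lra | apply pow_le, pos_INR]. }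
  apply Rle_trans with (sum_except n k (fun j => C * pair_weight n k j)).
  - apply sum_except_le; intros j Hj Hjk; exact (Rabs_r_jk_cheb_le n theta j k Hn Hk Hj Hjk).
  - rewrite sum_except_scal.
    pose proof (sum_pair_weight_le_2 n k Hn Hk).
    replace (26 / 10 * max_abs theta n * INR n ^ 2) with (C * 2) by (unfold C; field).
    apply Rmult_le_compat_l; assumption.
Qed.
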